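(* Let $\Lambda$ be a row-finite $k$-graph with no sources and let $\alpha$ be an action of $\mathbb{Z}^l$ on $\Lambda$ by automorphisms. Then $\Lambda$ is $\alpha$-aperiodic if and only if $\Lambda\times_\alpha\mathbb{Z}^l$ has no local periodicity.
   Context: A $k$-graph is a countable category $\Lambda$ with a functor $d:\Lambda\to\mathbb{N}^k$ with unique factorisation; vertices are degree-$0$ morphisms; row-finite: each $v\Lambda^n$ finite; no sources: each $v\Lambda^n$ nonempty. An automorphism is a bijective degree-preserving functor. $\Lambda\times_\alpha\mathbb{Z}^l$ is the $(k+l)$-graph with morphisms $\Lambda\times\mathbb{N}^l$, degree $(d(\lambda),m)$, $r(\lambda,m)=(r(\lambda),0)$, $s(\lambda,m)=(\alpha_{-m}(s(\lambda)),0)$, $(\mu,m)(\nu,n)=(\mu\alpha_m(\nu),m+n)$. For a $j$-graph $\Gamma$, $\Gamma^\infty$ is the set of degree-preserving functors $x:\Omega_j\to\Gamma$ ($\Omega_j=\{(a,b)\in\mathbb{N}^j\times\mathbb{N}^j:a\le b\}$, $r(a,b)=(a,a)$, $s(a,b)=(b,b)$, $d(a,b)=b-a$, composition $(a,b)(b,c)=(a,c)$), $v\Gamma^\infty=\{x:x(0,0)=v\}$, $\sigma^q(x)(0,n)=x(q,q+n)$. $\Gamma$ has no local periodicity if for every vertex $v$ and distinct $m,n\in\mathbb{N}^j$ there is $x\in v\Gamma^\infty$ with $\sigma^m(x)\ne\sigma^n(x)$. For an automorphism $\phi$ of $\Lambda$, $\phi^\infty(x)(0,n)=\phi(x(0,n))$.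 $\Lambda$ is $\alpha$-aperiodic if for each vertex $v$ and distinct $(p,m),(q,n)\in\mathbb{N}^k\times\mathbb{N}^l$ there is $x\in v\Lambda^\infty$ with $\sigma^p(\alpha^\infty_{-m}(x))\ne\sigma^q(\alpha^\infty_{-n}(x))$. *)

From HB Require Import structures.
From mathcomp Require Import all_boot all_order all_algebra.
Set Implicit Arguments. Unset Strict Implicit. Unset Printing Implicit Defensive.
Import GRing.Theory.

Notation nvec k := {ffun 'I_k -> nat}.
Notation zvec l := {ffun 'I_l -> int}.

Definition nzero k : nvec k := [ffun _ => 0%N].
Definition nadd k (m n : nvec k) : nvec k := [ffun i => (m i + n i)%N].
Definition nsub k (m n : nvec k) : nvec k := [ffun i => (m i - n i)%N].
Definition nle k (m n : nvec k) : bool := [forall i, m i <= n i].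
Definition zzero l : zvec l := [ffun _ => 0%R].
Definition zadd l (m n : zvec l) : zvec l := [ffun i => (m i + n i)%R].
Definition zneg l (m : zvec l) : zvec l := [ffun i => (- m i)%R].
Definition zofn l (m : nvec l) : zvec l := [ffun i => Posz (m i)].
Definition ncat k l (m : nvec k) (n : nvec l) : nvec (k + l) :=
  [ffun i => match split i with inl a => m a | inr b => n b end].

(* Raw data of a countable category with a degree map to N^k.
   Objects = vertices; composition is total but only meaningful
   on composable pairs (dom f = cod g); comp f g = "f g". *)
Record rawgraph (k : nat) := RawGraph {
  Ob : countType;
  Mor : countType;
  idm : Ob -> Mor;
  dom : Mor -> Ob;
  cod : Mor -> Ob;
  comp : Mor -> Mor -> Mor;
  deg : Mor -> nvec k
}.
Arguments idm {k} _ _.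
Arguments dom {k} _ _.
Arguments cod {k} _ _.
Arguments comp {k} _ _ _.
Arguments deg {k} _ _.

Definition is_category k (G : rawgraph k) : Prop :=
  (forall v, dom G (idm G v) = v /\ cod G (idm G v) = v)
  /\ (forall f, comp G (idm G (cod G f)) f = f /\ comp G f (idm G (dom G f)) = f)
  /\ (forall f g, dom G f = cod G g ->
        dom G (comp G f g) = dom G g /\ cod G (comp G f g) = cod G f)
  /\ (forall f g h, dom G f = cod G g -> dom G g = cod G h ->
        comp G (comp G f g) h = comp G f (comp G g h)).

Definition is_degree_functor k (G : rawgraph k) : Prop :=
  (forall v, deg G (idm G v) = nzero k)
  /\ (forall f g, dom G f = cod G g ->
        deg G (comp G f g) = nadd (deg G f) (deg G g)).

Definition unique_factorisation k (G : rawgraph k) : Prop :=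
  forall (f : Mor G) (m n : nvec k), deg G f = nadd m n ->
    exists! p : (Mor G * Mor G)%type,
      [/\ dom G p.1 = cod G p.2, deg G p.1 = m, deg G p.2 = n
        & f = comp G p.1 p.2].

Definition is_kgraph k (G : rawgraph k) : Prop :=
  [/\ is_category G, is_degree_functor G & unique_factorisation G].

Definition row_finite k (G : rawgraph k) : Prop :=
  forall (v : Ob G) (n : nvec k), exists s : seq (Mor G),
    forall f, cod G f = v -> deg G f = n -> f \in s.

Definition no_sources k (G : rawgraph k) : Prop :=
  forall (v : Ob G) (n : nvec k), exists f, cod G f = v /\ deg G f = n.

Definition is_automorphism k (G : rawgraph k) (fo : Ob G -> Ob G)
    (fm : Mor G -> Mor G) : Prop :=
  [/\ bijective fo, bijective fm,
      (forall f, [/\ dom G (fm f) = fo (dom G f), cod G (fm f) = fo (cod G f)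
                   & deg G (fm f) = deg G f]),
      (forall v, fm (idm G v) = idm G (fo v))
    & (forall f g, dom G f = cod G g -> fm (comp G f g) = comp G (fm f) (fm g))].

Definition is_Zaction k l (G : rawgraph k) (ao : zvec l -> Ob G -> Ob G)
    (am : zvec l -> Mor G -> Mor G) : Prop :=
  [/\ (forall g, is_automorphism (ao g) (am g)),
      (forall v, ao (zzero l) v = v), (forall f, am (zzero l) f = f),
      (forall g h v, ao (zadd g h) v = ao g (ao h v))
    & (forall g h f, am (zadd g h) f = am g (am h f))].

(* skew_product product Lambda x_alpha Z^l, a (k+l)-graph; vertex (v,0) is v *)
Definition skew_product k l (G : rawgraph k) (ao : zvec l -> Ob G -> Ob G)
    (am : zvec l -> Mor G -> Mor G) : rawgraph (k + l) :=
  {| Ob := Ob G;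
     Mor := (Mor G * nvec l)%type;
     idm := fun v => (idm G v, nzero l);
     dom := fun p => ao (zneg (zofn p.2)) (dom G p.1);
     cod := fun p => cod G p.1;
     comp := fun p q => (comp G p.1 (am (zofn p.2) q.1), nadd p.2 q.2);
     deg := fun p => ncat (deg G p.1) p.2 |}.

Definition Omega j := {p : (nvec j * nvec j)%type | nle p.1 p.2}.
Definition om j (a b : nvec j) (h : nle a b) : Omega j := exist _ (a, b) h.

Definition is_infpath j (G : rawgraph j) (x : Omega j -> Mor G) : Prop :=
  [/\ (forall a b (h : nle a b), deg G (x (om h)) = nsub b a),
      (forall a (h : nle a a), x (om h) = idm G (cod G (x (om h)))),
      (forall a b (hab : nle a b) (haa : nle a a),
          cod G (x (om hab)) = cod G (x (om haa)))
    & (forall a b c (hab : nle a b) (hbc : nle b c) (hac : nle a c),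
          dom G (x (om hab)) = cod G (x (om hbc))
          /\ x (om hac) = comp G (x (om hab)) (x (om hbc)))].

Definition starts_at j (G : rawgraph j) (v : Ob G) (x : Omega j -> Mor G) : Prop :=
  forall h : nle (nzero j) (nzero j), x (om h) = idm G v.

Lemma nle_shift j (q a b : nvec j) : nle a b -> nle (nadd q a) (nadd q b).
Proof.
move/forallP=> h; apply/forallP=> i; rewrite !ffunE leq_add2l; exact: h.
Qed.

Definition shiftO j (q : nvec j) (p : Omega j) : Omega j :=
  om (nle_shift q (valP p)).

Definition sigma j (T : Type) (q : nvec j) (x : Omega j -> T) : Omega j -> T :=
  fun p => x (shiftO q p).

Definition no_local_periodicity j (G : rawgraph j) : Prop :=
  forall (v : Ob G) (m n : nvec j), m <> n ->
    exists x, [/\ is_infpath x, starts_at v x & sigma m x <> sigma n x].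

Definition alpha_aperiodic k l (G : rawgraph k) (am : zvec l -> Mor G -> Mor G) : Prop :=
  forall (v : Ob G) (p q : nvec k) (m n : nvec l), (p, m) <> (q, n) ->
    exists x, [/\ is_infpath x, starts_at v x &
      sigma p (am (zneg (zofn m)) \o x) <> sigma q (am (zneg (zofn n)) \o x)].

(* An infinite path x of the k-graph determines a path of the skew product by
   y((a, c), (b, d)) = (alpha_{-c} x(a, b), d - c), and conversely every infinite path
   y of the skew product is of this form, x being its horizontal part
   x(a, b) = first component of y((a, 0), (b, 0)): the vertical segments of y have
   degree 0 in the first factor, hence are identities, which forces the formula.
   Under this bijection the shift sigma^(p, m) of the lift of x is the lift of
   sigma^p (alpha_{-m} x), so the two aperiodicity conditions are the same. *)

From mathcomp Require Import all_boot all_order all_algebra zify.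
From Stdlib Require Import FunctionalExtensionality.
Set Implicit Arguments. Unset Strict Implicit. Unset Printing Implicit Defensive.
Import GRing.Theory.

Definition nfst k l (A : nvec (k + l)) : nvec k := [ffun i => A (lshift l i)].
Definition nsnd k l (A : nvec (k + l)) : nvec l := [ffun i => A (rshift k i)].

Section NatVectors.

Variable k : nat.
Implicit Types a b c : nvec k.

Lemma nleP a b : reflect (forall i, a i <= b i) (nle a b).
Proof. exact: forallP. Qed.

Lemma nle0n a : nle (nzero k) a.
Proof. by apply/nleP=> i; rewrite ffunE. Qed.

Lemma nlenn a : nle a a.
Proof. exact/nleP. Qed.

Lemma nsubnn a : nsub a a = nzero k.
Proof. by apply/ffunP=> i; rewrite !ffunE subnn. Qed.

Lemma nsubn0 a : nsub a (nzero k) = a.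
Proof. by apply/ffunP=> i; rewrite !ffunE subn0. Qed.

Lemma nadd0n a : nadd (nzero k) a = a.
Proof. by apply/ffunP=> i; rewrite !ffunE. Qed.

Lemma nsub_nadd2l a b c : nsub (nadd a c) (nadd a b) = nsub c b.
Proof. by apply/ffunP=> i; rewrite !ffunE subnDl. Qed.

Lemma nadd_nsub a b c : nle a b -> nle b c -> nadd (nsub b a) (nsub c b) = nsub c a.
Proof.
move=> /nleP hab /nleP hbc; apply/ffunP=> i; rewrite !ffunE.
by have := hab i; have := hbc i; lia.
Qed.

Lemma om_eq a b a' b' (h : nle a b) (h' : nle a' b') :
  a = a' -> b = b' -> om h = om h'.
Proof. by move=> ea eb; subst; rewrite (bool_irrelevance h h'). Qed.

Lemma shiftO_om c a b (h : nle a b) (h' : nle (nadd c a) (nadd c b)) :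
  shiftO c (om h) = om h'.
Proof. exact: om_eq. Qed.

End NatVectors.

Section SplitVectors.

Variables k l : nat.
Implicit Types (a b : nvec k) (c d : nvec l) (A B : nvec (k + l)).

Lemma nfst_ncat a c : nfst (ncat a c) = a.
Proof. by apply/ffunP=> i; rewrite !ffunE (unsplitK (inl i)). Qed.

Lemma nsnd_ncat a c : nsnd (ncat a c) = c.
Proof. by apply/ffunP=> i; rewrite !ffunE (unsplitK (inr i)). Qed.

Lemma ncat_nfst_nsnd A : ncat (nfst A) (nsnd A) = A.
Proof. by apply/ffunP=> i; rewrite !ffunE; case: split_ordP=> j ->; rewrite ffunE. Qed.

Lemma ncat_inj a b c d : ncat a c = ncat b d -> (a, c) = (b, d).
Proof.
move=> e; have := congr1 (@nsnd k l) e; have := congr1 (@nfst k l) e.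
by rewrite !nfst_ncat !nsnd_ncat=> -> ->.
Qed.

Lemma nfst_nadd A B : nfst (nadd A B) = nadd (nfst A) (nfst B).
Proof. by apply/ffunP=> i; rewrite !ffunE. Qed.

Lemma nsnd_nadd A B : nsnd (nadd A B) = nadd (nsnd A) (nsnd B).
Proof. by apply/ffunP=> i; rewrite !ffunE. Qed.

Lemma nfst0 : nfst (nzero (k + l)) = nzero k.
Proof. by apply/ffunP=> i; rewrite !ffunE. Qed.

Lemma nsnd0 : nsnd (nzero (k + l)) = nzero l.
Proof. by apply/ffunP=> i; rewrite !ffunE. Qed.

Lemma ncat0 : ncat (nzero k) (nzero l) = nzero (k + l).
Proof. by apply/ffunP=> i; rewrite !ffunE; case: split_ordP=> j _; rewrite !ffunE. Qed.

Lemma nsub_ncat a b c d : nsub (ncat b d) (ncat a c) = ncat (nsub b a) (nsub d c).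
Proof. by apply/ffunP=> i; rewrite !ffunE; case: split_ordP=> j _; rewrite !ffunE. Qed.

Lemma nle_ncat a b c d : nle a b -> nle c d -> nle (ncat a c) (ncat b d).
Proof.
move=> /nleP hab /nleP hcd; apply/nleP=> i; rewrite !ffunE.
by case: split_ordP=> j _.
Qed.

Lemma nle_nfst A B : nle A B -> nle (nfst A) (nfst B).
Proof. by move/nleP=> h; apply/nleP=> i; rewrite !ffunE. Qed.

Lemma nle_nsnd A B : nle A B -> nle (nsnd A) (nsnd B).
Proof. by move/nleP=> h; apply/nleP=> i; rewrite !ffunE. Qed.

End SplitVectors.

Section IntVectors.

Variable l : nat.
Implicit Types (c d : nvec l) (g : zvec l).

Lemma zofn0 : zofn (nzero l) = zzero l.
Proof. by apply/ffunP=> i; rewrite !ffunE. Qed.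

Lemma zneg0 : zneg (zzero l) = zzero l.
Proof. by apply/ffunP=> i; rewrite !ffunE oppr0. Qed.

Lemma zaddrN g : zadd g (zneg g) = zzero l.
Proof. by apply/ffunP=> i; rewrite !ffunE subrr. Qed.

Lemma zaddNr g : zadd (zneg g) g = zzero l.
Proof. by apply/ffunP=> i; rewrite !ffunE addNr. Qed.

Lemma zneg_nadd c d : zneg (zofn (nadd c d)) = zadd (zneg (zofn d)) (zneg (zofn c)).
Proof. by apply/ffunP=> i; rewrite !ffunE; lia. Qed.

Lemma zofn_nsub c d :
  nle c d -> zadd (zofn (nsub d c)) (zneg (zofn d)) = zneg (zofn c).
Proof. by move/nleP=> h; apply/ffunP=> i; rewrite !ffunE; have := h i; lia. Qed.

Lemma zneg_nsub c d :
  nle c d -> zadd (zneg (zofn (nsub d c))) (zneg (zofn c)) = zneg (zofn d).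
Proof. by move/nleP=> h; apply/ffunP=> i; rewrite !ffunE; have := h i; lia. Qed.

End IntVectors.

Section ZAction.

Variables (k l : nat) (G : rawgraph k).
Variables (ao : zvec l -> Ob G -> Ob G) (am : zvec l -> Mor G -> Mor G).
Hypothesis HA : is_Zaction ao am.

Lemma am0 f : am (zzero l) f = f.
Proof. by case: HA. Qed.

Lemma ao0 v : ao (zzero l) v = v.
Proof. by case: HA. Qed.

Lemma amD g h f : am (zadd g h) f = am g (am h f).
Proof. by case: HA. Qed.

Lemma aoD g h v : ao (zadd g h) v = ao g (ao h v).
Proof. by case: HA. Qed.

Lemma amNK g f : am (zneg g) (am g f) = f.
Proof. by rewrite -amD zaddNr am0. Qed.

Lemma aoKN g v : ao g (ao (zneg g) v) = v.
Proof. by rewrite -aoD zaddrN ao0. Qed.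

Lemma am_automorphism g : is_automorphism (ao g) (am g).
Proof. by case: HA. Qed.

Lemma dom_am g f : dom G (am g f) = ao g (dom G f).
Proof. by case: (am_automorphism g)=> _ _ /(_ f) []. Qed.

Lemma cod_am g f : cod G (am g f) = ao g (cod G f).
Proof. by case: (am_automorphism g)=> _ _ /(_ f) []. Qed.

Lemma deg_am g f : deg G (am g f) = deg G f.
Proof. by case: (am_automorphism g)=> _ _ /(_ f) []. Qed.

Lemma am_idm g v : am g (idm G v) = idm G (ao g v).
Proof. by case: (am_automorphism g). Qed.

Lemma am_comp g f f' : dom G f = cod G f' -> am g (comp G f f') = comp G (am g f) (am g f').
Proof. by case: (am_automorphism g)=> _ _ _ _; apply. Qed.

End ZAction.

Section KGraph.

Variables (k : nat) (G : rawgraph k).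
Hypothesis HG : is_kgraph G.

Lemma dom_idm v : dom G (idm G v) = v.
Proof. by case: HG=> [[/(_ v) []]]. Qed.

Lemma cod_idm v : cod G (idm G v) = v.
Proof. by case: HG=> [[/(_ v) []]]. Qed.

Lemma comp_idl f : comp G (idm G (cod G f)) f = f.
Proof. by case: HG=> [[_ [/(_ f) []]]]. Qed.

Lemma comp_idr f : comp G f (idm G (dom G f)) = f.
Proof. by case: HG=> [[_ [/(_ f) []]]]. Qed.

Lemma deg_idm v : deg G (idm G v) = nzero k.
Proof. by case: HG=> _ []. Qed.

(* f = f 1 = 1 f are two factorisations of f into degrees (0, 0). *)
Lemma deg0_idm f : deg G f = nzero k -> f = idm G (cod G f).
Proof.
move=> df; case: HG=> _ _ /(_ f (nzero k) (nzero k)).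
rewrite nadd0n=> /(_ df) [p [_ uniq_p]].
have f_idr : p = (f, idm G (dom G f)).
  by apply: uniq_p; split=> /=; rewrite ?cod_idm ?deg_idm ?comp_idr.
have f_idl : p = (idm G (cod G f), f).
  by apply: uniq_p; split=> /=; rewrite ?dom_idm ?deg_idm ?comp_idl.
by case: (etrans (esym f_idr) f_idl).
Qed.

End KGraph.

Section SkewProduct.

Variables (k l : nat) (G : rawgraph k).
Variables (ao : zvec l -> Ob G -> Ob G) (am : zvec l -> Mor G -> Mor G).
Hypothesis HA : is_Zaction ao am.

Local Notation skew := (skew_product ao am).
Implicit Types (x : Omega k -> Mor G) (y : Omega (k + l) -> Mor skew) (v : Ob G).

Lemma skew_dom_horiz (f : Mor skew) : f.2 = nzero l -> dom skew f = dom G f.1.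
Proof. by move=> /= ->; rewrite zofn0 zneg0 (ao0 HA). Qed.

Lemma skew_comp_fst_horiz (f g : Mor skew) :
  f.2 = nzero l -> (comp skew f g).1 = comp G f.1 g.1.
Proof. by move=> /= ->; rewrite zofn0 (am0 HA). Qed.

Definition lift_path (x : Omega k -> Mor G) : Omega (k + l) -> Mor skew :=
  fun w => (am (zneg (zofn (nsnd (sval w).1))) (x (om (nle_nfst (valP w)))),
            nsub (nsnd (sval w).2) (nsnd (sval w).1)).

Lemma lift_path_om x A B (h : nle A B) (h' : nle (nfst A) (nfst B)) :
  lift_path x (om h) = (am (zneg (zofn (nsnd A))) (x (om h')), nsub (nsnd B) (nsnd A)).
Proof. by rewrite /lift_path /= (om_eq _ h'). Qed.

Lemma lift_path_ncat x a b c d (h : nle (ncat a c) (ncat b d)) (hab : nle a b) :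
  lift_path x (om h) = (am (zneg (zofn c)) (x (om hab)), nsub d c).
Proof. by rewrite (lift_path_om _ _ (nle_nfst h)) !nsnd_ncat (om_eq _ hab) ?nfst_ncat. Qed.

Lemma sigma_lift_path x P :
  sigma P (lift_path x) = lift_path (sigma (nfst P) (am (zneg (zofn (nsnd P))) \o x)).
Proof.
apply: functional_extensionality=> -[[A B] h].
change (lift_path x (shiftO P (om h)) =
  lift_path (sigma (nfst P) (am (zneg (zofn (nsnd P))) \o x)) (om h)).
rewrite (shiftO_om h (nle_shift P h)) (lift_path_om _ _ (nle_nfst (nle_shift P h))).
rewrite (lift_path_om _ h (nle_nfst h)) /sigma /=.
rewrite (shiftO_om (nle_nfst h) (nle_shift (nfst P) (nle_nfst h))).
rewrite !nsnd_nadd nsub_nadd2l zneg_nadd (amD HA).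
by congr (am _ (am _ (x _)), _); apply: om_eq; rewrite nfst_nadd.
Qed.

Lemma lift_path_inj : injective lift_path.
Proof.
move=> x x' e; apply: functional_extensionality=> -[[a b] h].
have h0 := nle_ncat h (nlenn (nzero l)).
have : (lift_path x (om h0)).1 = (lift_path x' (om h0)).1 by rewrite e.
by rewrite !(lift_path_ncat _ h0 h) zofn0 zneg0 !(am0 HA).
Qed.

Lemma lift_infpath x : is_infpath x -> is_infpath (lift_path x).
Proof.
case=> Hdeg Hid Hcod Hcomp; split.
- move=> A B h; rewrite (lift_path_om _ _ (nle_nfst h)) /= (deg_am HA) Hdeg.
  by rewrite -nsub_ncat !ncat_nfst_nsnd.
- move=> A h; rewrite (lift_path_om _ _ (nle_nfst h)) /=.
  by rewrite {1}(Hid _ (nle_nfst h)) (am_idm HA) (cod_am HA) nsubnn.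
- move=> A B hAB hAA; rewrite (lift_path_om _ _ (nle_nfst hAB)).
  by rewrite (lift_path_om _ _ (nle_nfst hAA)) /= !(cod_am HA) (Hcod _ _ _ (nle_nfst hAA)).
- move=> A B C hAB hBC hAC.
  rewrite (lift_path_om _ _ (nle_nfst hAB)) (lift_path_om _ _ (nle_nfst hBC)).
  rewrite (lift_path_om _ _ (nle_nfst hAC)) /=.
  have [dom_x comp_x] := Hcomp _ _ _ (nle_nfst hAB) (nle_nfst hBC) (nle_nfst hAC).
  split.
  + by rewrite (dom_am HA) (cod_am HA) -(aoD HA) (zneg_nsub (nle_nsnd hAB)) dom_x.
  + rewrite -(amD HA) (zofn_nsub (nle_nsnd hAB)) -(am_comp HA) // -comp_x.
    by rewrite (nadd_nsub (nle_nsnd hAB) (nle_nsnd hBC)).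
Qed.

Lemma lift_path_start v x :
  starts_at v x -> @starts_at _ skew v (lift_path x).
Proof.
move=> x_v h; rewrite (lift_path_om _ _ (nle_nfst h)) /=.
rewrite (om_eq _ (nle0n (nzero k)) (@nfst0 k l) (@nfst0 k l)) x_v.
by rewrite nsnd0 zofn0 zneg0 (am0 HA) nsubnn.
Qed.

Definition proj_path (y : Omega (k + l) -> Mor skew) : Omega k -> Mor G :=
  fun p => (y (om (nle_ncat (valP p) (nlenn (nzero l))))).1.

Lemma proj_path_om y a b (hab : nle a b)
    (h : nle (ncat a (nzero l)) (ncat b (nzero l))) :
  proj_path y (om hab) = (y (om h)).1.
Proof. by rewrite /proj_path (om_eq _ h). Qed.

Lemma skew_infpath_deg y : is_infpath y ->
  forall a b c d (h : nle (ncat a c) (ncat b d)),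
  deg G (y (om h)).1 = nsub b a /\ (y (om h)).2 = nsub d c.
Proof.
case=> Hdeg _ _ _ a b c d h; have := Hdeg _ _ h.
by rewrite nsub_ncat=> /ncat_inj [-> ->].
Qed.

Lemma proj_infpath y : is_infpath y -> is_infpath (proj_path y).
Proof.
move=> Hy; case: (Hy)=> _ Hid Hcod Hcomp.
have horiz (a b : nvec k) (hab : nle a b) := nle_ncat hab (nlenn (nzero l)).
split.
- move=> a b hab; rewrite (proj_path_om _ hab (horiz _ _ hab)).
  by case: (skew_infpath_deg Hy (horiz _ _ hab)).
- move=> a haa; rewrite (proj_path_om _ haa (horiz _ _ haa)).
  by rewrite {1}(Hid _ (horiz _ _ haa)).
- move=> a b hab haa; rewrite (proj_path_om _ hab (horiz _ _ hab)).
  rewrite (proj_path_om _ haa (horiz _ _ haa)).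
  exact: (Hcod _ _ (horiz _ _ hab) (horiz _ _ haa)).
- move=> a b c hab hbc hac; rewrite (proj_path_om _ hab (horiz _ _ hab)).
  rewrite (proj_path_om _ hbc (horiz _ _ hbc)) (proj_path_om _ hac (horiz _ _ hac)).
  have [_ ab_horiz] := skew_infpath_deg Hy (horiz _ _ hab); rewrite nsubnn in ab_horiz.
  have [dom_y comp_y] := Hcomp _ _ _ (horiz _ _ hab) (horiz _ _ hbc) (horiz _ _ hac).
  rewrite (skew_dom_horiz ab_horiz) in dom_y.
  by rewrite comp_y (skew_comp_fst_horiz _ ab_horiz).
Qed.

Lemma proj_path_start v y :
  @starts_at _ skew v y -> starts_at v (proj_path y).
Proof.
move=> y_v h; rewrite (proj_path_om _ h (nle_ncat h (nlenn _))).
by rewrite (om_eq _ (nle0n (nzero (k + l))) (@ncat0 k l) (@ncat0 k l)) y_v.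
Qed.

Hypothesis HG : is_kgraph G.

Lemma skew_comp_fst_vert_r (f g : Mor skew) :
  dom skew f = cod skew g -> deg G g.1 = nzero k -> (comp skew f g).1 = f.1.
Proof.
move=> /= fg /(deg0_idm HG) ->; rewrite (am_idm HA) -fg (aoKN HA).
exact: (comp_idr HG (f.1 : Mor G)).
Qed.

Lemma skew_comp_fst_vert_l (f g : Mor skew) :
  dom skew f = cod skew g -> deg G f.1 = nzero k -> (comp skew f g).1 = am (zofn f.2) g.1.
Proof.
move=> /= fg /(deg0_idm HG) f_id; rewrite [in LHS]f_id.
have -> : cod G f.1 = cod G (am (zofn f.2) g.1).
  by rewrite (cod_am HA) -fg (aoKN HA) f_id (cod_idm HG) (dom_idm HG).
exact: (comp_idl HG (am (zofn f.2) g.1)).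
Qed.

(* With 1 = (a, 0), 2 = (b, 0), 3 = (b, d), 4 = (a, c), compare the factorisations
   y(1, 3) = y(1, 2) y(2, 3) = y(1, 4) y(4, 3); the vertical factors y(2, 3) and y(1, 4)
   have identity first components. *)
Lemma infpath_skewE y : is_infpath y ->
  forall a b c d (h : nle (ncat a c) (ncat b d)) (hab : nle a b),
  y (om h) = (am (zneg (zofn c)) (proj_path y (om hab)), nsub d c).
Proof.
move=> Hy a b c d h hab; case: (Hy)=> _ _ _ Hcomp.
have h12 := nle_ncat hab (nlenn (nzero l)).
have h23 := nle_ncat (nlenn b) (nle0n d).
have h13 := nle_ncat hab (nle0n d).
have h14 := nle_ncat (nlenn a) (nle0n c).
have [dom123 comp123] := Hcomp _ _ _ h12 h23 h13.
have [dom143 comp143] := Hcomp _ _ _ h14 h h13.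
have [deg23 _] := skew_infpath_deg Hy h23.
have [deg14 snd14] := skew_infpath_deg Hy h14.
have [_ snd43] := skew_infpath_deg Hy h.
rewrite nsubnn in deg23; rewrite nsubnn in deg14; rewrite nsubn0 in snd14.
have fst13_via2 : (y (om h13)).1 = proj_path y (om hab).
  by rewrite comp123 (skew_comp_fst_vert_r dom123 deg23) (proj_path_om _ hab h12).
have fst13_via4 : (y (om h13)).1 = am (zofn c) (y (om h)).1.
  rewrite comp143 (skew_comp_fst_vert_l dom143 deg14).
  exact: (congr1 (fun m => am (zofn m) (y (om h)).1) snd14).
rewrite (etrans (esym fst13_via2) fst13_via4) (amNK HA) -snd43.
exact: surjective_pairing.
Qed.

Lemma lift_proj_path y : is_infpath y -> lift_path (proj_path y) = y.
Proof.
move=> Hy; apply: functional_extensionality=> -[[A B] h].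
change (lift_path (proj_path y) (om h) = y (om h)).
have h' : nle (ncat (nfst A) (nsnd A)) (ncat (nfst B) (nsnd B)) by rewrite !ncat_nfst_nsnd.
rewrite (lift_path_om _ _ (nle_nfst h)).
rewrite (om_eq h h' (esym (ncat_nfst_nsnd A)) (esym (ncat_nfst_nsnd B))).
by rewrite (infpath_skewE Hy h' (nle_nfst h)).
Qed.

End SkewProduct.

Lemma alpha_aperiodic_skew k l (G : rawgraph k) ao am :
  is_Zaction ao am -> alpha_aperiodic am ->
  no_local_periodicity (@skew_product k l G ao am).
Proof.
move=> HA Hap v P Q PQ.
have [|x [Hx x_v Hne]] := Hap v (nfst P) (nfst Q) (nsnd P) (nsnd Q).
  by case=> eP eQ; apply: PQ; rewrite -[P]ncat_nfst_nsnd -[Q]ncat_nfst_nsnd eP eQ.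
exists (lift_path ao am x); split; [exact: lift_infpath | exact: lift_path_start |].
by move=> E; apply: Hne; apply: (lift_path_inj HA); rewrite -!(sigma_lift_path HA).
Qed.

Lemma skew_aperiodic_alpha k l (G : rawgraph k) ao am :
  is_kgraph G -> is_Zaction ao am ->
  no_local_periodicity (@skew_product k l G ao am) -> alpha_aperiodic am.
Proof.
move=> HG HA Hn v p q m n pm_qn.
have [y [Hy y_v Hne]] := Hn v (ncat p m) (ncat q n) (fun e => pm_qn (ncat_inj e)).
exists (proj_path y); split; [exact: proj_infpath | exact: proj_path_start |].
move=> E; apply: Hne; rewrite -(lift_proj_path HA HG Hy) !(sigma_lift_path HA).
by rewrite !nfst_ncat !nsnd_ncat E.
Qed.

Unset Implicit Arguments.

Theorem lemma4p7 (k l : nat) (G : rawgraph k)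
    (ao : zvec l -> Ob G -> Ob G) (am : zvec l -> Mor G -> Mor G) :
  is_kgraph G -> row_finite G -> no_sources G -> is_Zaction ao am ->
  (alpha_aperiodic am <-> no_local_periodicity (skew_product ao am)).
Proof.
move=> HG _ _ HA; split; [exact: alpha_aperiodic_skew | exact: skew_aperiodic_alpha].
Qed.
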